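(* Let $n\ge2$ and $k\ge 3$ be integers, $x>0$ and $\alpha_1,\dots,\alpha_{k-2}\in\mathbb{R}$. Then $\det A_{n;k}(x,x^{\alpha_1},\dots,x^{\alpha_{k-2}})=\det A_{n;k}(x,x^{1-\alpha_{k-2}},\dots,x^{1-\alpha_1})$.
   Context: For an integer $n\ge 2$ and $y\ge0$, $y\neq 1$, let $k_n(y)=\frac1n\sum_{l=1}^{n}\frac{1-y\cos(2\pi l/n)}{(1+y^2-2y\cos(2\pi l/n))^{3/2}}-1$, and set $k_n(1)=\delta_n:=\frac{1}{4n}\sum_{l=1}^{n-1}\frac{1}{\sin(\pi l/n)}-1$. For $x_1,\dots,x_{k-1}>0$ and $x_k:=1$, $A_{n;k}(x_1,\dots,x_{k-1})$ is the $k\times k$ matrix whose $(i,j)$ entry is $k_n(x_j/x_i)$ (so diagonal entries equal $\delta_n$). *)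

From HB Require Import structures.
From mathcomp Require Import all_boot all_order all_algebra.
From mathcomp Require Import all_classical all_reals all_analysis.
Set Implicit Arguments. Unset Strict Implicit. Unset Printing Implicit Defensive.
Import Order.TTheory GRing.Theory Num.Theory.
Local Open Scope ring_scope.

Definition delta_n (R : realType) (n : nat) : R :=
  (4 * n%:R)^-1 * (\sum_(1 <= l < n) (sin (pi * l%:R / n%:R))^-1) - 1.

Definition k_n (R : realType) (n : nat) (y : R) : R :=
  if y == 1 then delta_n R n
  else (n%:R)^-1 * (\sum_(1 <= l < n.+1)
          ((1 - y * cos (2 * pi * l%:R / n%:R)) /
           powR (1 + y ^+ 2 - 2 * y * cos (2 * pi * l%:R / n%:R)) (3 / 2))) - 1.

(* A_{n;k}(x_1,...,x_{k-1}): x is 1-based (x 1, ..., x (k-1) used), x_k := 1;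
   entry (i,j) (0-based) is k_n(x_{j+1} / x_{i+1}). *)
Definition A_nk (R : realType) (n k : nat) (x : nat -> R) : 'M[R]_k :=
  let xx := fun i : nat => if i == k then 1 else x i in
  \matrix_(i < k, j < k) k_n n (xx j.+1 / xx i.+1).

From HB Require Import structures.
From mathcomp Require Import all_boot all_order all_algebra.
From mathcomp Require Import all_classical all_reals all_analysis.
From mathcomp Require Import perm zify.
Set Implicit Arguments. Unset Strict Implicit. Unset Printing Implicit Defensive.
Import Order.TTheory GRing.Theory Num.Theory.
Local Open Scope ring_scope.

(* The entries of A_{n;k} depend only on the ratios x_j / x_i.  Replacing the
   weights (x_1, ..., x_k) by (x / x_k, ..., x / x_1) sends x_j / x_i to
   x_{k+1-i} / x_{k+1-j}, i.e. transposes the matrix and conjugates it by the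
   order-reversing permutation; neither changes the determinant.  For the
   weights of the statement, x / x_{k+1-i} is exactly the reflected weight,
   because x / x^a = x^(1-a).  Nothing about k_n is used. *)

Lemma det_row_col_perm (R : comUnitRingType) m (s : {perm 'I_m}) (A : 'M[R]_m) :
  \det (row_perm s (col_perm s A)) = \det A.
Proof.
rewrite row_permE col_permE !det_mulmx !det_perm odd_permV.
by rewrite mulrC -mulrA -signr_addb addbb expr0 mulr1.
Qed.

Definition rev_ord_perm n : {perm 'I_n} := perm (@rev_ord_inj n).

Section RatioMatrix.

Variables (R : fieldType) (g : R -> R) (k : nat).

Definition ratio_mx (v : 'I_k -> R) : 'M[R]_k := \matrix_(i, j) g (v j / v i).

Lemma ratio_mx_reflect (c : R) (v : 'I_k -> R) : c != 0 ->
  ratio_mx (fun i => c / v (rev_ord i)) =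
  row_perm (rev_ord_perm k) (col_perm (rev_ord_perm k) (ratio_mx v)^T).
Proof.
move=> c_neq0; apply/matrixP => i j; rewrite !mxE !permE.
by rewrite invf_div mulrC -!mulrA mulKf.
Qed.

Lemma det_ratio_mx_reflect (c : R) (v : 'I_k -> R) : c != 0 ->
  \det (ratio_mx (fun i => c / v (rev_ord i))) = \det (ratio_mx v).
Proof. by move=> c_neq0; rewrite ratio_mx_reflect // det_row_col_perm det_tr. Qed.

End RatioMatrix.

Definition A_nk_weight (R : realType) (k : nat) (x : nat -> R) (i : 'I_k) : R :=
  if i.+1 == k then 1 else x i.+1.
Arguments A_nk_weight {R} k x i.

Lemma A_nk_ratio_mx (R : realType) (n k : nat) (x : nat -> R) :
  A_nk n k x = ratio_mx (k_n n) (A_nk_weight k x).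
Proof. by apply/matrixP => i j; rewrite !mxE. Qed.

Lemma powRr1B (R : realType) (x a : R) : 0 < x -> powR x (1 - a) = x / powR x a.
Proof. by move=> x_gt0; rewrite powRB ?powRr1 ?ltW // (gt_eqF x_gt0) implybT. Qed.

Lemma A_nk_weight_reflect (R : realType) (k : nat) (x : R) (alpha : nat -> R) :
  (2 <= k)%N -> 0 < x ->
  A_nk_weight k (fun i => if i == 1%N then x else powR x (1 - alpha (k - i)%N)) =
  (fun i => x / A_nk_weight k
     (fun j => if j == 1%N then x else powR x (alpha (j - 1)%N)) (rev_ord i)).
Proof.
move=> k_ge2 x_gt0; apply: funext => -[m m_lt]; rewrite /A_nk_weight /=.
have [-> | m_gt0] := posnP m.
  by rewrite ifN ?eqxx ?ifT ?divr1 //; lia.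
have [m_last | m_nlast] := eqVneq m.+1 k.
  by rewrite m_last subnn ifN /= ?divff ?(gt_eqF x_gt0) //; lia.
by rewrite !ifN ?subSS ?subn0 ?powRr1B //; lia.
Qed.

Theorem lemma6 (R : realType) (n k : nat) (x : R) (alpha : nat -> R) :
  (2 <= n)%N -> (3 <= k)%N -> 0 < x ->
  \det (A_nk n k (fun i => if i == 1%N then x else powR x (alpha (i - 1)%N))) =
  \det (A_nk n k (fun i => if i == 1%N then x else powR x (1 - alpha (k - i)%N))).
Proof.
move=> _ k_ge3 x_gt0.
rewrite !A_nk_ratio_mx A_nk_weight_reflect ?(ltnW k_ge3) //.
by rewrite det_ratio_mx_reflect // gt_eqF.
Qed.
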